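(* Let $\mathcal V$ be a finite set of nodes, $\mathcal P$ a finite set of labels, $\mathcal E$ a set of unordered pairs of nodes, and $\theta_{ip},\theta_{ij,pq}\in\mathbb R$ arbitrary. For $\vec\lambda\in\mathbb R^{\mathcal V}$, let $L(\cdot,\vec\lambda)$ be the pairwise pseudo-Boolean function $$L(\vec y,\vec\lambda)=\sum_{i\in\mathcal V}\sum_{p\in\mathcal P}\theta_{ip}y_{ip}+\sum_{\{i,j\}\in\mathcal E}\sum_{p,q\in\mathcal P}\theta_{ij,pq}y_{ip}y_{jq}+\sum_{i\in\mathcal V}\lambda_i\Big(\sum_{p\in\mathcal P}y_{ip}-1\Big)$$ of binary variables $\vec y$, and let $D_{QPBO}(\vec\lambda)$ be the optimal value of the standard LP relaxation of $\min_{\vec y}L(\vec y,\vec\lambda)$. Then $\max_{\vec\lambda\in\mathbb R^{\mathcal V}}D_{QPBO}(\vec\lambda)$ equals the optimal value of the linear program $$\min_{\vec y}\ \sum_{i\in\mathcal V}\sum_{p\in\mathcal P}\theta_{ip}y_{ip}+\sum_{\{i,j\}\in\mathcal E}\sum_{p,q\in\mathcal P}\theta_{ij,pq}y_{ij,pq}$$ subject to $y_{ip},y_{ij,pq}\in[0,1]$; $y_{ij,pq}\le y_{ip}$ and $y_{ij,pq}\le y_{jq}$ for all $\{i,j\}\in\mathcal E$, $p,q\in\mathcal P$; $y_{ij,pq}\ge y_{ip}+y_{jq}-1$ for all $\{i,j\}\in\mathcal E$, $p,q\in\mathcal P$; and $\sum_{p\in\mathcal P}y_{ip}=1$ for all $i\in\mathcal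 V$.
   Context: The standard LP relaxation of minimizing a pairwise pseudo-Boolean function $F(\vec y)=c+\sum_{i\in\mathcal A}a_iy_i+\sum_{\{i,j\}\in\mathcal B}b_{ij}y_iy_j$ over $\vec y\in\{0,1\}^{\mathcal A}$ (with $\mathcal B$ a set of pairs from $\mathcal A$, $c$ a constant) is: minimize $c+\sum_i a_iz_{i1}+\sum_{\{i,j\}}b_{ij}z_{ij,11}$ over nonnegative variables $z_{i1},z_{i0},z_{ij,11},z_{ij,10},z_{ij,01},z_{ij,00}$ subject to $z_{i1}+z_{i0}=1$, $z_{ij,10}+z_{ij,11}=z_{i1}$, $z_{ij,01}+z_{ij,00}=z_{i0}$, $z_{ij,01}+z_{ij,11}=z_{j1}$, $z_{ij,00}+z_{ij,10}=z_{j0}$. Here it is applied with variables $y_{ip}$ indexed by $(i,p)\in\mathcal V\times\mathcal P$ and pairs $\{(i,p),(j,q)\}$ for $\{i,j\}\in\mathcal E$. (This lower bound is the one computed by the QPBO algorithm; the method is called nonsubmodular relaxation.) *)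

From HB Require Import structures.
From mathcomp Require Import all_boot all_order all_algebra.
From mathcomp Require Import all_classical all_reals.
Set Implicit Arguments. Unset Strict Implicit. Unset Printing Implicit Defensive.
Import Order.TTheory GRing.Theory Num.Theory.
Local Open Scope ring_scope.
Local Open Scope classical_set_scope.

Section Defs.
Variable R : realType.

(* ---------- Standard LP relaxation of a pairwise pseudo-Boolean function ----
   F(y) = c + sum_{u in A} a u y_u + sum_{(u,v) in B} b u v y_u y_v,
   where each unordered pair {u,v} of the pair set is listed once, as an
   ordered pair (u,v) in B.  Variables:  z u true = z_{u1}, z u false = z_{u0},
   zz u v x y = z_{uv,xy}  (x refers to u, y refers to v). *)
Definition pb_lp_feasible (A : finType) (B : {set A * A})
    (z : A -> bool -> R) (zz : A -> A -> bool -> bool -> R) : Prop :=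
  (forall u x, 0 <= z u x) /\
  (forall u v x y, (u, v) \in B -> 0 <= zz u v x y) /\
  (forall u, z u true + z u false = 1) /\
  (forall u v, (u, v) \in B ->
     [/\ zz u v true false + zz u v true true = z u true,
         zz u v false true + zz u v false false = z u false,
         zz u v false true + zz u v true true = z v true &
         zz u v false false + zz u v true false = z v false]).

Definition pb_lp_objective (A : finType) (B : {set A * A})
    (c : R) (a : A -> R) (b : A -> A -> R)
    (z : A -> bool -> R) (zz : A -> A -> bool -> bool -> R) : R :=
  c + \sum_(u : A) a u * z u true
    + \sum_(uv in B) b uv.1 uv.2 * zz uv.1 uv.2 true true.

(* optimal value (the minimum; the feasible set is nonempty and compact) *)
Definition pb_lp_value (A : finType) (B : {set A * A})
    (c : R) (a : A -> R) (b : A -> A -> R) : R :=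
  inf [set t : R | exists z zz, pb_lp_feasible B z zz /\
                                t = pb_lp_objective B c a b z zz].

(* ---------- The Lagrangian L(., lambda) as a pairwise pseudo-Boolean function
   on variables y_{ip}, (i,p) in V x P, with pairs {(i,p),(j,q)}, {i,j} in E.
   E is given by one orientation (i,j) of each unordered edge. *)
Definition qpbo_pairs (V P : finType) (E : {set V * V}) : {set (V * P) * (V * P)} :=
  [set uv : (V * P) * (V * P) | (uv.1.1, uv.2.1) \in E].

Definition D_QPBO (V P : finType) (E : {set V * V})
    (th1 : V -> P -> R) (th2 : V -> V -> P -> P -> R) (lam : V -> R) : R :=
  pb_lp_value (qpbo_pairs P E)
    (- \sum_(i : V) lam i)
    (fun u : V * P => th1 u.1 u.2 + lam u.1)
    (fun u v : V * P => th2 u.1 v.1 u.2 v.2).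

Definition local_lp_feasible (V P : finType) (E : {set V * V})
    (y : V -> P -> R) (yy : V -> V -> P -> P -> R) : Prop :=
  (forall i p, 0 <= y i p <= 1) /\
  (forall i j p q, (i, j) \in E ->
     [/\ 0 <= yy i j p q <= 1,
         yy i j p q <= y i p, yy i j p q <= y j q &
         y i p + y j q - 1 <= yy i j p q]) /\
  (forall i, \sum_(p : P) y i p = 1).

Definition local_lp_objective (V P : finType) (E : {set V * V})
    (th1 : V -> P -> R) (th2 : V -> V -> P -> P -> R)
    (y : V -> P -> R) (yy : V -> V -> P -> P -> R) : R :=
  \sum_(i : V) \sum_(p : P) th1 i p * y i p
  + \sum_(ij in E) \sum_(p : P) \sum_(q : P) th2 ij.1 ij.2 p q * yy ij.1 ij.2 p q.

Definition local_lp_value (V P : finType) (E : {set V * V})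
    (th1 : V -> P -> R) (th2 : V -> V -> P -> P -> R) : R :=
  inf [set t : R | exists y yy, local_lp_feasible E y yy /\
                                t = local_lp_objective E th1 th2 y yy].

End Defs.

From HB Require Import structures.
From mathcomp Require Import all_boot all_order all_algebra.
From mathcomp Require Import all_classical all_reals.
From mathcomp Require Import ring lra.
Set Implicit Arguments. Unset Strict Implicit. Unset Printing Implicit Defensive.
Import Order.TTheory GRing.Theory Num.Theory.
Local Open Scope ring_scope.

(* For the vector x = (y_ip, y_ij,pq) of the
   local LP, the QPBO variables of L(., lambda) are the affine expressions
     z_ip,1 = y_ip,  z_ip,0 = 1 - y_ip,  z_ij,pq,11 = y_ij,pq,  z_ij,pq,10 = y_ip - y_ij,pq,
     z_ij,pq,01 = y_jq - y_ij,pq,  z_ij,pq,00 = 1 - y_ip - y_jq + y_ij,pq,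
   and the QPBO constraints say exactly that these are nonnegative.  So the QPBO LP for
   lambda is the local LP with the equations sum_p y_ip = 1 dropped and
   sum_i lambda_i (sum_p y_ip - 1) added to the objective, whence D_QPBO(lambda) is at
   most the local optimum.  Conversely, the affine Farkas lemma (proved by
   Fourier-Motzkin elimination) writes the local objective minus the local optimum as a
   nonnegative constant plus a nonnegative combination of the constraints; the
   multipliers of the two inequalities making up sum_p y_ip = 1 give a lambda for which
   every QPBO-feasible point has objective at least the local optimum. *)

Section AffineFarkas.
Variable R : realType.

Lemma sumr_indicator (I : finType) (j : I) (F : I -> R) :
  \sum_i (i == j)%:R * F i = F j.
Proof.
rewrite (bigD1 j) //= eqxx mul1r big1 ?addr0 // => i /negbTE ->; exact: mul0r.
Qed.

Lemma exists_between (L U : seq R) :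
  (forall l u, l \in L -> u \in U -> l <= u) ->
  exists t, (forall l, l \in L -> l <= t) /\ (forall u, u \in U -> t <= u).
Proof.
elim: L => [|l L IH] H.
  elim: U {H} => [|u U [t [_ Ht]]]; first by exists 0.
  exists (Num.min t u); split => // w; rewrite inE => /orP[/eqP->|wU].
    by rewrite ge_min lexx orbT.
  by rewrite ge_min Ht.
have [t [Ht1 Ht2]] :
    exists t, (forall l, l \in L -> l <= t) /\ (forall u, u \in U -> t <= u).
  by apply: IH => l' u lL; apply: H; rewrite inE lL orbT.
exists (Num.max t l); split.
  move=> w; rewrite inE => /orP[/eqP->|wL]; first by rewrite le_max lexx orbT.
  by rewrite le_max Ht1.
by move=> u uU; rewrite ge_max Ht2 //= H // inE eqxx.
Qed.

Definition aff (X : Type) := ((X -> R) * R)%type.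

Definition eval (X : finType) (S : {set X}) (g : aff X) (x : X -> R) : R :=
  \sum_(k in S) g.1 k * x k + g.2.

Definition comb (X : Type) (J : finType) (mu : J -> R) (g : J -> aff X) : aff X :=
  (fun k => \sum_j mu j * (g j).1 k, \sum_j mu j * (g j).2).

Lemma eval_comb (X J : finType) (S : {set X}) (mu : J -> R) g x :
  eval S (comb mu g) x = \sum_j mu j * eval S (g j) x.
Proof.
rewrite /eval /comb /=; under [RHS]eq_bigr do rewrite mulrDr mulr_sumr.
rewrite big_split /= exchange_big; congr (_ + _); apply: eq_bigr => k _.
by rewrite mulr_suml; apply: eq_bigr => j _; rewrite mulrA.
Qed.

Lemma comb_comb (X : Type) (J K : finType) (mu : K -> R) (nu : K -> J -> R)
    (g : J -> aff X) :
  comb (fun j => \sum_i mu i * nu i j) g = comb mu (fun i => comb (nu i) g).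
Proof.
have combE (F : J -> R) :
    \sum_j (\sum_i mu i * nu i j) * F j = \sum_i mu i * \sum_j nu i j * F j.
  under eq_bigr do rewrite mulr_suml.
  rewrite exchange_big; apply: eq_bigr => i _; rewrite mulr_sumr.
  by apply: eq_bigr => j _; rewrite mulrA.
by rewrite /comb combE; congr pair; apply/funext => k; rewrite combE.
Qed.

Lemma eval_coef0 (X : finType) (S : {set X}) (g : aff X) x :
  (forall k, k \in S -> g.1 k = 0) -> eval S g x = g.2.
Proof. by move=> g0; rewrite /eval big1 ?add0r // => k /g0 ->; rewrite mul0r. Qed.

Lemma eval_setD1 (X : finType) (S : {set X}) (k : X) (g : aff X) x t :
  k \in S ->
  eval S g (fun l => if l == k then t else x l) = eval (S :\ k) g x + g.1 k * t.
Proof.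
move=> kS; rewrite /eval (big_setD1 k kS) /= eqxx.
rewrite (eq_bigr (fun l => g.1 l * x l)); first by lra.
by move=> l; rewrite in_setD1 => /andP[/negbTE -> _].
Qed.

Section FourierMotzkin.
Variables (X J : finType) (g : J -> aff X) (k : X).

Let a j := (g j).1 k.

(* Fourier-Motzkin elimination of [k]: keep the constraints not involving x_k and, for
   each [p] with positive and [q] with negative x_k coefficient, add the nonnegative
   combination of the two in which x_k cancels. *)
Definition fm_weight (j' : J + J * J) (j : J) : R :=
  match j' with
  | inl i => if a i == 0 then (j == i)%:R else 0
  | inr (p, q) => if (0 < a p) && (a q < 0)
                  then - a q * (j == p)%:R + a p * (j == q)%:R else 0
  end.

Definition fm_elim (j' : J + J * J) : aff X := comb (fm_weight j') g.

Lemma fm_weight_ge0 j' j : 0 <= fm_weight j' j.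
Proof.
case: j' => [i|[p q]] /=; first by case: ifP; rewrite ?ler0n.
case: ifP => // /andP[ap aq].
by apply: addr_ge0; apply: mulr_ge0; rewrite ?ler0n ?oppr_ge0 ?ltW.
Qed.

Lemma fm_weight_sum (F : J -> R) j' : \sum_j fm_weight j' j * F j =
  match j' with
  | inl i => if a i == 0 then F i else 0
  | inr (p, q) => if (0 < a p) && (a q < 0) then - a q * F p + a p * F q else 0
  end.
Proof.
case: j' => [i|[p q]] /=; case: ifP => _; try by rewrite big1 // => j _; rewrite mul0r.
- by rewrite sumr_indicator.
- under eq_bigr do rewrite mulrDl -!mulrA.
  by rewrite big_split /= -!mulr_sumr !sumr_indicator.
Qed.

Lemma fm_elim_coef_k j' : (fm_elim j').1 k = 0.
Proof.
rewrite /fm_elim /comb /= fm_weight_sum -/(a _).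
case: j' => [i|[p q]]; case: ifP => //; first by move/eqP.
by move=> _; rewrite /a; ring.
Qed.

Lemma fm_elim_feasible (S : {set X}) : k \in S ->
  (exists x, forall j', 0 <= eval (S :\ k) (fm_elim j') x) ->
  exists x, forall j, 0 <= eval S (g j) x.
Proof.
(* The constraints bound x_k below by [L] and above by [U], and the combined constraints
   [fm_elim (inr (p, q))] say that each lower bound is below each upper bound. *)
move=> kS [x Hx]; pose e j := eval (S :\ k) (g j) x.
have {}Hx j' : 0 <= \sum_j fm_weight j' j * e j.
  by have := Hx j'; rewrite /fm_elim eval_comb.
pose L := [seq - e p / a p | p <- enum J & 0 < a p].
pose U := [seq e q / - a q | q <- enum J & a q < 0].
have [t [Lt tU]] : exists t, (forall l, l \in L -> l <= t) /\ (forall u, u \in U -> t <= u).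
  apply: exists_between => l u /mapP[p]; rewrite mem_filter => /andP[ap _] ->.
  move=> /mapP[q]; rewrite mem_filter => /andP[aq _] ->.
  have := Hx (inr (p, q)); rewrite fm_weight_sum ap aq /= => H.
  rewrite ler_pdivrMr // mulrAC ler_pdivlMr ?oppr_gt0 //; lra.
exists (fun l => if l == k then t else x l) => j; rewrite eval_setD1 // -/(e j) -/(a j).
case: (ltgtP (a j) 0) => aj.
- have : t <= e j / - a j by apply/tU/map_f; rewrite mem_filter aj mem_enum.
  rewrite ler_pdivlMr ?oppr_gt0 //; lra.
- have : - e j / a j <= t by apply/Lt/map_f; rewrite mem_filter aj mem_enum.
  rewrite ler_pdivrMr //; lra.
- by have := Hx (inl j); rewrite fm_weight_sum aj eqxx; lra.
Qed.

End FourierMotzkin.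

Theorem farkas (X J : finType) (S : {set X}) (g : J -> aff X) :
  ~ (exists x, forall j, 0 <= eval S (g j) x) ->
  exists mu : J -> R, [/\ forall j, 0 <= mu j,
    forall k, k \in S -> (comb mu g).1 k = 0 & (comb mu g).2 < 0].
Proof.
move: {2}#|S| (erefl #|S|) => n; elim: n J S g => [|n IH] J S g cS Hinf.
  have S0 : S = finset.set0 by apply/eqP; rewrite -cards_eq0 cS.
  have [j0 Hj0] : exists j0, (g j0).2 < 0.
    apply: contra_notP Hinf => H; exists (fun _ => 0) => j.
    rewrite eval_coef0 => [|k]; last by rewrite S0 inE.
    by rewrite leNgt; apply/negP => Hj; apply: H; exists j.
  exists (fun j => (j == j0)%:R); split => [j|k|]; rewrite ?S0 ?inE ?ler0n //.
  by rewrite /comb /= sumr_indicator.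
have [k kS] : exists k, k \in S by apply/set0Pn; rewrite -cards_eq0 cS.
have cS' : #|S :\ k| = n by move: cS; rewrite (cardsD1 k S) kS add1n => -[].
have [mu' [mu'0 mu'S mu'c]] :=
  IH _ _ (fm_elim g k) cS' (contra_not (fm_elim_feasible kS) Hinf).
exists (fun j => \sum_j' mu' j' * fm_weight g k j' j).
rewrite (comb_comb mu' (fm_weight g k) g); split => //.
- by move=> j; apply: sumr_ge0 => j' _; apply: mulr_ge0 => //; apply: fm_weight_ge0.
- move=> l lS; have [->|lk] := eqVneq l k; last by apply: mu'S; rewrite in_setD1 lk.
  rewrite /comb /= big1 // => j' _.
  by have := fm_elim_coef_k g k j'; rewrite /fm_elim /= => ->; rewrite mulr0.
Qed.

Definition dot (X : finType) (f x : X -> R) : R := \sum_k f k * x k.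

Lemma evalT (X : finType) (g : aff X) x : eval [set: X] g x = dot g.1 x + g.2.
Proof. by rewrite /eval (eq_bigl predT) // => k; rewrite finset.in_setT. Qed.

Lemma dot_shift (X : finType) (f x y : X -> R) (s : R) :
  dot f (fun k => x k + s * y k) = dot f x + s * dot f y.
Proof.
rewrite /dot mulr_sumr -big_split; apply: eq_bigr => k _ /=; ring.
Qed.

Lemma dot_div (X : finType) (f y : X -> R) (t : R) :
  dot f (fun k => y k / t) = dot f y / t.
Proof. by rewrite /dot mulr_suml; apply: eq_bigr => k _; rewrite mulrA. Qed.

Section Homogenization.
Variables (X J : finType) (g : J -> aff X) (c : X -> R) (v : R).

Definition feasible (x : X -> R) := forall j, 0 <= eval [set: X] (g j) x.

Definition homog (j' : J + bool) : aff (X + unit) :=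
  match j' with
  | inl j => (fun k => if k is inl l then (g j).1 l else (g j).2, 0)
  | inr true => (fun k => if k is inr _ then 1 else 0, 0)
  | inr false => (fun k => if k is inl l then - c l else v, -1)
  end.

Lemma eval_homog j' (x : X + unit -> R) :
  eval [set: X + unit] (homog j') x =
  match j' with
  | inl j => dot (g j).1 (fun l => x (inl l)) + (g j).2 * x (inr tt)
  | inr true => x (inr tt)
  | inr false => - dot c (fun l => x (inl l)) + v * x (inr tt) - 1
  end.
Proof.
rewrite evalT /dot big_sumType /= (big_pred1 tt) => [|[]//].
case: j' => [j|[]] /=; rewrite ?addr0 //.
  by rewrite big1 ?add0r ?mul1r // => k _; rewrite mul0r.
by rewrite -sumrN (eq_bigr (fun k => - (c k * x (inl k)))) // => k _; rewrite mulNr.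
Qed.

Hypothesis feasible_x0 : exists x0, feasible x0.
Hypothesis lower_bound : forall x, feasible x -> v <= dot c x.

Lemma homog_infeasible :
  ~ exists x, forall j', 0 <= eval [set: X + unit] (homog j') x.
Proof.
move=> [x Hx]; pose y l := x (inl l); pose tau := x (inr tt).
have Hg j : 0 <= dot (g j).1 y + (g j).2 * tau by have := Hx (inl j); rewrite eval_homog.
have tau_ge0 : 0 <= tau by have := Hx (inr true); rewrite eval_homog.
have Hc : dot c y + 1 <= v * tau.
  by have := Hx (inr false); rewrite eval_homog -/y -/tau; lra.
have [tau0|tau_neq0] := eqVneq tau 0; last first.
  have tau_pos : 0 < tau by rewrite lt_def tau_neq0.
  have feas : feasible (fun l => y l / tau).
    move=> j; rewrite evalT dot_div -[(g j).2](mulfK tau_neq0) -mulrDl.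
    by apply: divr_ge0; [apply: Hg | apply: ltW].
  by have := lower_bound feas; rewrite dot_div ler_pdivlMr //; lra.
(* Now [y] is a recession direction of the feasible set along which the objective
   decreases, so moving far enough along it from [x0] undercuts [v]. *)
have [x0 Hx0] := feasible_x0.
pose s := `|dot c x0 - v| + 1.
have s_ge0 : 0 <= s by apply: addr_ge0.
have s_large : dot c x0 - v + 1 <= s by rewrite /s lerD2r ler_norm.
have feas : feasible (fun l => x0 l + s * y l).
  move=> j; have := Hx0 j; have := Hg j; rewrite !evalT dot_shift tau0 mulr0 addr0 => gy.
  have : 0 <= s * dot (g j).1 y by apply: mulr_ge0.
  lra.
have cy : s * dot c y <= s * -1.
  by apply: ler_wpM2l => //; move: Hc; rewrite tau0; lra.
by have := lower_bound feas; rewrite dot_shift; lra.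
Qed.

End Homogenization.

Theorem affine_farkas (X J : finType) (g : J -> aff X) (c : X -> R) (v : R) :
  (exists x0, feasible g x0) -> (forall x, feasible g x -> v <= dot c x) ->
  exists mu : J -> R, exists m0 : R, [/\ forall j, 0 <= mu j, 0 <= m0 &
    forall x, dot c x - v = m0 + \sum_j mu j * eval [set: X] (g j) x].
Proof.
move=> feas_x0 lb.
have [nu [nu_ge0 nu_coef nu_const]] := farkas (homog_infeasible feas_x0 lb).
pose nt := nu (inr true); pose nf := nu (inr false).
have nu_constE : (comb nu (homog g c v)).2 = - nf.
  rewrite /comb /= big_sumType /= big_bool big1 //= => [|j _]; last by rewrite mulr0.
  by rewrite /nf; lra.
have nf_gt0 : 0 < nf by rewrite -oppr_lt0 -nu_constE.
exists (fun j => nu (inl j) / nf), (nt / nf); split.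
- by move=> j; apply: divr_ge0; [apply: nu_ge0 | apply: ltW].
- by apply: divr_ge0; [apply: nu_ge0 | apply: ltW].
(* Evaluate the identity given by the certificate at the point [(x, 1)]. *)
move=> x; pose x' (k : X + unit) := if k is inl l then x l else 1.
have := eval_comb [set: X + unit] nu (homog g c v) x'.
rewrite eval_coef0 // nu_constE big_sumType big_bool !eval_homog.
under eq_bigr do rewrite eval_homog mulr1.
rewrite /= mulr1 -/nt -/nf (_ : (fun l => x l) = x) // => H.
have -> : \sum_j nu (inl j) / nf * eval [set: X] (g j) x =
          (\sum_j nu (inl j) * eval [set: X] (g j) x) / nf.
  by rewrite mulr_suml; apply: eq_bigr => j _; rewrite mulrAC.
under eq_bigr do rewrite evalT.
rewrite -mulrDl; apply: (mulIf (lt0r_neq0 nf_gt0)); rewrite mulfVK ?lt0r_neq0 //.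
lra.
Qed.

Definition aff_lin (X : eqType) (s : seq (R * X)) (d : R) : aff X :=
  (fun k => \sum_(ck <- s | ck.2 == k) ck.1, d).

Lemma eval_aff_lin (X : finType) (s : seq (R * X)) d x :
  eval [set: X] (aff_lin s d) x = \sum_(ck <- s) ck.1 * x ck.2 + d.
Proof.
rewrite evalT /dot /=; congr (_ + _).
under eq_bigr do rewrite big_mkcond mulr_suml.
rewrite exchange_big; apply: eq_bigr => ck _.
rewrite (bigD1 ck.2) //= eqxx big1 ?addr0 // => k /negbTE.
by rewrite eq_sym => ->; rewrite mul0r.
Qed.

End AffineFarkas.

Section PseudoBooleanLP.
Variables (R : realType) (A : finType) (B : {set A * A}).
Variables (c : R) (a : A -> R) (b : A -> A -> R).

Lemma Nnorm_le_mulr (r y : R) : 0 <= y <= 1 -> - `|r| <= r * y.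
Proof.
move=> /andP[y0 y1]; have [r0|r0] := lerP 0 r.
  by rewrite ger0_norm //; nra.
by rewrite ltr0_norm //; nra.
Qed.

Lemma pb_lp_objective_ge z zz : pb_lp_feasible B z zz ->
  c - \sum_u `|a u| - \sum_(uv in B) `|b uv.1 uv.2| <= pb_lp_objective B c a b z zz.
Proof.
move=> [z0 [zz0 [z1 zzE]]].
rewrite /pb_lp_objective -addrA -opprD -!addrA lerD2l opprD.
apply: lerD; rewrite -sumrN; apply: ler_sum; [move=> u _|move=> [u w] uw];
  apply: Nnorm_le_mulr.
  by have := z0 u true; have := z0 u false; have := z1 u => *; apply/andP; split; lra.
have [e1 _ _ _] := zzE u w uw.
have := zz0 u w true true uw; have := zz0 u w true false uw.
have := z0 u true; have := z0 u false; have := z1 u.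
by move=> *; apply/andP; split; lra.
Qed.

Lemma pb_lp_value_le z zz : pb_lp_feasible B z zz ->
  pb_lp_value B c a b <= pb_lp_objective B c a b z zz.
Proof.
move=> feas; apply: ge_inf; last by exists z, zz.
by eexists => _ [z' [zz' [feas' ->]]]; apply: pb_lp_objective_ge feas'.
Qed.

End PseudoBooleanLP.

Section LocalPolytope.
Variables (R : realType) (V P : finType) (E : {set V * V}).
Variables (th1 : V -> P -> R) (th2 : V -> V -> P -> P -> R).

Definition var := ((V * P) + (V * P) * (V * P))%type.

Definition edge (u w : V * P) : bool := (u.1, w.1) \in E.

Definition cost (k : var) : R :=
  match k with
  | inl u => th1 u.1 u.2
  | inr (u, w) => if edge u w then th2 u.1 w.1 u.2 w.2 else 0
  end.

Definition unary_part (x : var -> R) (i : V) (p : P) : R := x (inl (i, p)).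
Definition pair_part (x : var -> R) (i j : V) (p q : P) : R :=
  x (inr ((i, p), (j, q))).

Definition vec_of_local (y : V -> P -> R) (yy : V -> V -> P -> P -> R) (k : var) : R :=
  match k with inl u => y u.1 u.2 | inr (u, w) => yy u.1 w.1 u.2 w.2 end.

Definition vec_of_qpbo (z : V * P -> bool -> R) (zz : V * P -> V * P -> bool -> bool -> R)
    (k : var) : R :=
  match k with inl u => z u true | inr (u, w) => zz u w true true end.

Definition qpbo_unary (x : var -> R) (u : V * P) (b : bool) : R :=
  if b then x (inl u) else 1 - x (inl u).

Definition qpbo_pair (x : var -> R) (u w : V * P) (a b : bool) : R :=
  let m := x (inr (u, w)) in
  match a, b with
  | true, true => m
  | true, false => x (inl u) - m
  | false, true => x (inl w) - m
  | false, false => 1 - x (inl u) - x (inl w) + m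
  end.

Definition cidx :=
  (((V * P) * bool + ((V * P) * (V * P)) * (bool * bool)) + V * bool)%type.

(* Each constraint [inl j] states that one entry of the QPBO variables [qpbo_unary x] /
   [qpbo_pair x] is nonnegative; [inr (i, b)] are the two halves of the equation
   [\sum_p y_ip = 1]. *)
Definition constr (j : cidx) : aff R var :=
  match j with
  | inl (inl (u, true)) => aff_lin [:: (1, inl u)] 0
  | inl (inl (u, false)) => aff_lin [:: (-1, inl u)] 1
  | inl (inr ((u, w), (a, b))) =>
      if ~~ edge u w then aff_lin [::] 0 else
      let m := inr (u, w) in
      match a, b with
      | true, true => aff_lin [:: (1, m)] 0
      | true, false => aff_lin [:: (1, inl u); (-1, m)] 0
      | false, true => aff_lin [:: (1, inl w); (-1, m)] 0
      | false, false => aff_lin [:: (-1, inl u); (-1, inl w); (1, m)] 1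
      end
  | inr (i, b) => let s : R := if b then 1 else -1 in
      aff_lin [seq (s, inl (i, p)) | p <- enum P] (- s)
  end.

Lemma eval_constr_unary u b x :
  eval [set: var] (constr (inl (inl (u, b)))) x = qpbo_unary x u b.
Proof. by case: b; rewrite eval_aff_lin !big_cons big_nil /=; lra. Qed.

Lemma eval_constr_pair u w a b x :
  eval [set: var] (constr (inl (inr ((u, w), (a, b))))) x =
  if edge u w then qpbo_pair x u w a b else 0.
Proof.
rewrite /=; case: (edge u w) => /=; last by rewrite eval_aff_lin big_nil addr0.
by case: a; case: b; rewrite eval_aff_lin !big_cons big_nil /=; lra.
Qed.

Lemma eval_constr_sum i b x :
  eval [set: var] (constr (inr (i, b))) x =
  (if b then 1 else -1) * (\sum_p x (inl (i, p)) - 1).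
Proof.
rewrite eval_aff_lin big_map big_enum /= -mulr_sumr.
by case: b; lra.
Qed.

Lemma sum_constr_eq (mu : cidx -> R) x :
  \sum_ib mu (inr ib) * eval [set: var] (constr (inr ib)) x =
  - \sum_i (mu (inr (i, false)) - mu (inr (i, true))) * (\sum_p x (inl (i, p)) - 1).
Proof.
rewrite (eq_bigr (fun ib => mu (inr (ib.1, ib.2)) *
  eval [set: var] (constr (inr (ib.1, ib.2))) x)); last by move=> [].
rewrite -(pair_bigA _ (fun i b =>
  mu (inr (i, b)) * eval [set: var] (constr (inr (i, b))) x)).
by rewrite -sumrN; apply: eq_bigr => i _; rewrite big_bool !eval_constr_sum /=; lra.
Qed.

Lemma local_lp_feasible_of_feasible x :
  feasible constr x -> local_lp_feasible E (unary_part x) (pair_part x).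
Proof.
move=> Hx; have unary u b := Hx (inl (inl (u, b))).
have pair u w a b := Hx (inl (inr ((u, w), (a, b)))).
split; [|split].
- move=> i p; have := unary (i, p) true; have := unary (i, p) false.
  by rewrite !eval_constr_unary /qpbo_unary /unary_part => *; apply/andP; split; lra.
- move=> i j p q ij_E; have uw : edge (i, p) (j, q) by [].
  have := pair (i, p) (j, q); rewrite /pair_part => pairE.
  move: (pairE true true) (pairE true false) (pairE false true) (pairE false false).
  rewrite !eval_constr_pair uw /=.
  have := unary (i, p) false; rewrite eval_constr_unary /= => *.
  by rewrite /unary_part; split; [apply/andP; split|..]; lra.
- move=> i; have := Hx (inr (i, true)); have := Hx (inr (i, false)).
  by rewrite !eval_constr_sum /unary_part; lra.
Qed.

Lemma feasible_vec_of_local y yy :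
  local_lp_feasible E y yy -> feasible constr (vec_of_local y yy).
Proof.
move=> [y01 [yy_ok y_sum]] [[[u b]|[[u w] [a b]]]|[i b]].
- by rewrite eval_constr_unary; have /andP[] := y01 u.1 u.2; case: b => /=; lra.
- rewrite eval_constr_pair; case uw : (edge u w) => //.
  by have [/andP[] *] := yy_ok _ _ u.2 w.2 uw; case: a; case: b => /=; lra.
- by rewrite eval_constr_sum /= y_sum subrr mulr0.
Qed.

Lemma cost_dot x :
  dot cost x = local_lp_objective E th1 th2 (unary_part x) (pair_part x).
Proof.
rewrite /dot /local_lp_objective big_sumType /=; congr (_ + _).
  rewrite (eq_bigr (fun u => th1 u.1 u.2 * x (inl (u.1, u.2)))); last by move=> [].
  by rewrite -(pair_bigA _ (fun i p => th1 i p * x (inl (i, p)))).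
pose G i j p q := (if (i, j) \in E then th2 i j p q else 0) * pair_part x i j p q.
transitivity (\sum_i \sum_j \sum_p \sum_q G i j p q).
  rewrite (eq_bigr (fun uw => G uw.1.1 uw.2.1 uw.1.2 uw.2.2)); last by move=> [[? ?] [? ?]].
  rewrite -(pair_bigA _ (fun u w => G u.1 w.1 u.2 w.2)) /=.
  under eq_bigr => u _ do rewrite -(pair_bigA _ (fun j q => G u.1 j u.2 q)) /=.
  rewrite -(pair_bigA _ (fun i p => \sum_j \sum_q G i j p q)) /=.
  by apply: eq_bigr => i _; rewrite exchange_big.
rewrite (pair_bigA _ (fun i j => \sum_p \sum_q G i j p q)) /= [RHS]big_mkcond /=.
apply: eq_bigr => -[i j] _; rewrite /G /=.
by case: ifP => _ //; apply: big1 => p _; apply: big1 => q _; rewrite mul0r.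
Qed.

Lemma qpbo_pairsE u w : ((u, w) \in qpbo_pairs P E) = edge u w.
Proof. by rewrite inE. Qed.

Lemma pb_lp_feasible_qpbo x :
  (forall j, 0 <= eval [set: var] (constr (inl j)) x) ->
  pb_lp_feasible (qpbo_pairs P E) (qpbo_unary x) (qpbo_pair x).
Proof.
move=> Hx; split; [|split; [|split]].
- by move=> u b; rewrite -eval_constr_unary.
- move=> u w a b; rewrite qpbo_pairsE => uw.
  by have := Hx (inr ((u, w), (a, b))); rewrite eval_constr_pair uw.
- by move=> u; rewrite /qpbo_unary; lra.
- by move=> u w _; rewrite /qpbo_pair /qpbo_unary; split; lra.
Qed.

Lemma vec_of_qpbo_qpbo x : vec_of_qpbo (qpbo_unary x) (qpbo_pair x) =1 x.
Proof. by case=> [|[]]. Qed.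

Section QPBOFeasible.
Variables (z : V * P -> bool -> R) (zz : V * P -> V * P -> bool -> bool -> R).
Hypothesis feas : pb_lp_feasible (qpbo_pairs P E) z zz.

Lemma qpbo_unary_vec_of_qpbo u b : qpbo_unary (vec_of_qpbo z zz) u b = z u b.
Proof. by have [_ [_ [z1 _]]] := feas; case: b => //=; have := z1 u; lra. Qed.

Lemma qpbo_pair_vec_of_qpbo u w a b : edge u w ->
  qpbo_pair (vec_of_qpbo z zz) u w a b = zz u w a b.
Proof.
rewrite -qpbo_pairsE => uw; have [_ [_ [z1 /(_ u w uw) [e10 e01 e11 e00]]]] := feas.
by have := z1 u; case: a; case: b => /=; lra.
Qed.

Lemma constr_ineq_vec_of_qpbo j : 0 <= eval [set: var] (constr (inl j)) (vec_of_qpbo z zz).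
Proof.
have [z0 [zz0 _]] := feas.
case: j => [[u b]|[[u w] [a b]]]; first by rewrite eval_constr_unary qpbo_unary_vec_of_qpbo.
rewrite eval_constr_pair; case uw : (edge u w) => //.
by rewrite qpbo_pair_vec_of_qpbo // zz0 ?qpbo_pairsE.
Qed.

End QPBOFeasible.

Lemma pb_lp_objective_lagrangian (lam : V -> R) z zz :
  pb_lp_objective (qpbo_pairs P E) (- \sum_i lam i) (fun u : V * P => th1 u.1 u.2 + lam u.1)
    (fun u w : V * P => th2 u.1 w.1 u.2 w.2) z zz =
  dot cost (vec_of_qpbo z zz) + \sum_i lam i * (\sum_p z (i, p) true - 1).
Proof.
rewrite /pb_lp_objective /dot big_sumType /=.
have -> : \sum_u (th1 u.1 u.2 + lam u.1) * z u true =
    \sum_u th1 u.1 u.2 * z u true + \sum_u lam u.1 * z u true.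
  by rewrite -big_split; apply: eq_bigr => u _; rewrite mulrDl.
have -> : \sum_u lam u.1 * z u true = \sum_i lam i * \sum_p z (i, p) true.
  rewrite (eq_bigr (fun u => lam u.1 * z (u.1, u.2) true)); last by move=> [].
  rewrite -(pair_bigA _ (fun i p => lam i * z (i, p) true)) /=.
  by apply: eq_bigr => i _; rewrite mulr_sumr.
have -> : \sum_(uw in qpbo_pairs P E) th2 uw.1.1 uw.2.1 uw.1.2 uw.2.2 * zz uw.1 uw.2 true true
    = \sum_uw cost (inr uw) * vec_of_qpbo z zz (inr uw).
  rewrite big_mkcond /=; apply: eq_bigr => -[u w] _ /=; rewrite qpbo_pairsE.
  by case: ifP => _ //; rewrite mul0r.
have -> : \sum_i lam i * (\sum_p z (i, p) true - 1) =
    \sum_i lam i * \sum_p z (i, p) true - \sum_i lam i.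
  by rewrite -sumrB; apply: eq_bigr => i _; rewrite mulrBr mulr1.
lra.
Qed.

Local Notation qpbo_objective lam :=
  (pb_lp_objective (qpbo_pairs P E) (- \sum_i lam i)
     (fun u : V * P => th1 u.1 u.2 + lam u.1) (fun u w : V * P => th2 u.1 w.1 u.2 w.2)).

Lemma pb_lp_feasible_qpbo_local y yy : local_lp_feasible E y yy ->
  pb_lp_feasible (qpbo_pairs P E) (qpbo_unary (vec_of_local y yy))
    (qpbo_pair (vec_of_local y yy)).
Proof.
by move/feasible_vec_of_local => feas; apply: pb_lp_feasible_qpbo => j; apply: feas.
Qed.

Lemma qpbo_objective_local lam y yy : local_lp_feasible E y yy ->
  qpbo_objective lam (qpbo_unary (vec_of_local y yy)) (qpbo_pair (vec_of_local y yy)) =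
  local_lp_objective E th1 th2 y yy.
Proof.
move=> [_ [_ y_sum]]; rewrite pb_lp_objective_lagrangian big1 => [|i _]; last first.
  by rewrite /= y_sum subrr mulr0.
rewrite addr0; transitivity (dot cost (vec_of_local y yy)); last exact: cost_dot.
by apply: eq_bigr => k _; rewrite vec_of_qpbo_qpbo.
Qed.

Lemma D_QPBO_le_local_objective lam y yy : local_lp_feasible E y yy ->
  D_QPBO E th1 th2 lam <= local_lp_objective E th1 th2 y yy.
Proof.
move=> feas; rewrite -(qpbo_objective_local lam feas).
exact: pb_lp_value_le (pb_lp_feasible_qpbo_local feas).
Qed.

Lemma local_lp_value_le y yy : local_lp_feasible E y yy ->
  local_lp_value E th1 th2 <= local_lp_objective E th1 th2 y yy.
Proof.
move=> feas; apply: ge_inf; last by exists y, yy.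
exists (D_QPBO E th1 th2 (fun=> 0)) => _ [y' [yy' [feas' ->]]].
exact: D_QPBO_le_local_objective.
Qed.

Section NonemptyLabels.
Hypothesis P_gt0 : (0 < #|P|)%N.

Lemma exists_local_lp_feasible :
  exists (y : V -> P -> R) yy, local_lp_feasible E y yy.
Proof.
have [p0 _] := card_gt0P P_gt0; pose y (i : V) (p : P) : R := (p == p0)%:R.
have y01 i p : y i p = 0 \/ y i p = 1 by rewrite /y; case: eqP; [right|left].
exists y, (fun i j p q => y i p * y j q); split; [|split].
- by move=> i p; case: (y01 i p) => ->; rewrite ?lexx ?ler01.
- move=> i j p q _; case: (y01 i p) => ->; case: (y01 j q) => ->;
    by rewrite ?mulr0 ?mulr1 ?mul0r; split; try (apply/andP; split); lra.
- by move=> i; under eq_bigr do rewrite -[y i _]mulr1; rewrite sumr_indicator.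
Qed.

Lemma D_QPBO_le_local_lp_value lam : D_QPBO E th1 th2 lam <= local_lp_value E th1 th2.
Proof.
have [y [yy feas]] := exists_local_lp_feasible.
apply: lb_le_inf; first by exists (local_lp_objective E th1 th2 y yy), y, yy.
by move=> _ [y' [yy' [feas' ->]]]; apply: D_QPBO_le_local_objective.
Qed.

Lemma exists_local_lp_value_le_D_QPBO :
  exists lam, local_lp_value E th1 th2 <= D_QPBO E th1 th2 lam.
Proof.
have [y0 [yy0 feas0]] := exists_local_lp_feasible.
have lb x : feasible constr x -> local_lp_value E th1 th2 <= dot cost x.
  by move/local_lp_feasible_of_feasible => feas; rewrite cost_dot; apply: local_lp_value_le.
have [mu [m0 [mu_ge0 m0_ge0 certificate]]] :=
  affine_farkas (ex_intro _ _ (feasible_vec_of_local feas0)) lb.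
exists (fun i => mu (inr (i, false)) - mu (inr (i, true))); apply: lb_le_inf.
  pose x0 := vec_of_local y0 yy0.
  eexists; exists (qpbo_unary x0), (qpbo_pair x0).
  by split; first exact: pb_lp_feasible_qpbo_local.
move=> _ [z [zz [feas ->]]]; rewrite pb_lp_objective_lagrangian.
have := certificate (vec_of_qpbo z zz); rewrite big_sumType sum_constr_eq /=.
have : 0 <= \sum_j mu (inl j) * eval [set: var] (constr (inl j)) (vec_of_qpbo z zz).
  by apply: sumr_ge0 => j _; apply: mulr_ge0 => //; apply: constr_ineq_vec_of_qpbo.
lra.
Qed.

End NonemptyLabels.

End LocalPolytope.

Theorem theorem8 (R : realType) (V P : finType) (E : {set V * V})
    (th1 : V -> P -> R) (th2 : V -> V -> P -> P -> R)
    (HP : (0 < #|P|)%N)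
    (Eirr : forall i j, (i, j) \in E -> i != j)
    (Easym : forall i j, (i, j) \in E -> (j, i) \notin E) :
  (exists lam : V -> R, D_QPBO E th1 th2 lam = local_lp_value E th1 th2) /\
  (forall lam : V -> R, D_QPBO E th1 th2 lam <= local_lp_value E th1 th2).
Proof.
have [lam lam_ge] := exists_local_lp_value_le_D_QPBO E th1 th2 HP.
split; last exact: D_QPBO_le_local_lp_value.
by exists lam; apply/le_anti; rewrite lam_ge D_QPBO_le_local_lp_value.
Qed.
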